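(* Let $n,m$ be even integers with $2\le m\le n$ (for the second formula) and $n\ge0$ (for the first), let $h_l$ be the orthonormal Hermite polynomials for the weight $e^{-x^2}$ on $\mathbb{R}$, and let $\lambda_{\frac n2+1}$ and $\lambda^{m/2}_{\frac{n-m}2+1}$ be the smallest zeros of $p^{(-1/2)}_{\frac n2+1}(x)$ and $p^{(-1/2)}_{\frac{n-m}2+1}(x,\frac m2)$. For constants $\kappa_1,\kappa_2\in\mathbb{C}$ let $\mathcal{H}_n(x)=\kappa_1\sum_{l=0}^{n/2}p^{(-1/2)}_l(\lambda_{\frac n2+1})h_{2l}(x)$ and $\mathcal{H}^m_n(x)=\kappa_2\sum_{l=m/2}^{n/2}p^{(-1/2)}_{l-\frac m2}(\lambda^{m/2}_{\frac{n-m}2+1},\frac m2)h_{2l}(x)$. Then for $x^2$ different from the respective zero, $\mathcal{H}_n(x)=\kappa_1b_{\frac n2+1}\,p^{(-1/2)}_{n/2}(\lambda_{\frac n2+1})\dfrac{h_{n+2}(x)}{x^2-\lambda_{\frac n2+1}}$, $\mathcal{H}^m_n(x)=\kappa_2\dfrac{b_{\frac n2+1}\,p^{(-1/2)}_{\frac{n-m}2}(\lambda^{m/2}_{\frac{n-m}2+1},\frac m2)\,h_{n+2}(x)+b_{m/2}\,h_{m-2}(x)}{x^2-\lambda^{m/2}_{\frac{n-m}2+1}}$, where $b_k=\sqrt{k(k-\frac12)}$ are the Laguerre recurrence coefficients for $\alpha=-\frac12$.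
   Context: $p^{(\alpha)}_l$ are the orthonormal Laguerre polynomials in $L^2([0,\infty),x^\alpha e^{-x})$ with positive leading coefficients; they satisfy $b_{l+1}p^{(\alpha)}_{l+1}(x)=(x-a_l)p^{(\alpha)}_l(x)-b_lp^{(\alpha)}_{l-1}(x)$ with $a_l=2l+\alpha+1$, $b_l=\sqrt{l(l+\alpha)}$ ($l\ge1$). Associated Laguerre polynomials: $p^{(\alpha)}_{-1}(x,M)=0$, $p^{(\alpha)}_0(x,M)=1$, $b_{M+l+1}p^{(\alpha)}_{l+1}(x,M)=(x-a_{M+l})p^{(\alpha)}_l(x,M)-b_{M+l}p^{(\alpha)}_{l-1}(x,M)$. One has $h_{2l}(x)=p^{(-1/2)}_l(x^2)$. With $\kappa_1,\kappa_2$ normalizing, $\mathcal{H}_n$, $\mathcal{H}^m_n$ are the minimizers of $\int x^2|P|^2e^{-x^2}dx$ over normalized polynomials in $\operatorname{span}\{h_0,\dots,h_n\}$, resp. $\operatorname{span}\{h_m,\dots,h_n\}$. *)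

From HB Require Import structures.
From mathcomp Require Import all_boot all_order all_algebra.
From mathcomp Require Import reals trigo.
From mathcomp Require Import complex.
Set Implicit Arguments. Unset Strict Implicit. Unset Printing Implicit Defensive.
Import Order.TTheory GRing.Theory Num.Theory.
Local Open Scope ring_scope.

Section Defs.
Variable R : realType.

Definition lag_a (alpha : R) (l : nat) : R := 2 * l%:R + alpha + 1.
Definition lag_b (alpha : R) (l : nat) : R := Num.sqrt (l%:R * (l%:R + alpha)).

(* lag_pair alpha M c x l = (q_{l-1}(x), q_l(x)) where q_{-1} = 0, q_0 = c and
   b_{M+l+1} q_{l+1} = (x - a_{M+l}) q_l - b_{M+l} q_{l-1}. *)
Fixpoint lag_pair (alpha : R) (M : nat) (c x : R) (l : nat) : R * R :=
  match l with
  | 0 => (0, c)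
  | l'.+1 =>
      let (u, v) := lag_pair alpha M c x l' in
      (v, ((x - lag_a alpha (M + l')) * v - lag_b alpha (M + l') * u)
            / lag_b alpha (M + l').+1)
  end.

Definition alpha0 : R := - (2%:R)^-1.

(* p_0^{(-1/2)} = (int_0^oo x^{-1/2} e^{-x} dx)^{-1/2} = Gamma(1/2)^{-1/2} = pi^{-1/4} *)
Definition lag_p0 : R := (Num.sqrt (Num.sqrt pi))^-1.

Definition lagN (l : nat) (x : R) : R := (lag_pair alpha0 0 lag_p0 x l).2.

Definition lagA (l M : nat) (x : R) : R := (lag_pair alpha0 M 1 x l).2.

Definition bl (k : nat) : R := lag_b alpha0 k.

Fixpoint herm_pair (x : R) (k : nat) : R * R :=
  match k with
  | 0 => (0, (Num.sqrt (Num.sqrt pi))^-1)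
  | k'.+1 =>
      let (u, v) := herm_pair x k' in
      (v, (x * v - Num.sqrt (k'%:R / 2%:R) * u) / Num.sqrt (k'.+1%:R / 2%:R))
  end.

Definition hermite (k : nat) (x : R) : R := (herm_pair x k).2.

Local Open Scope complex_scope.

Definition calH (kappa1 : R[i]) (n : nat) (lam x : R) : R[i] :=
  kappa1 * (\sum_(0 <= l < (n./2).+1) lagN l lam * hermite (2 * l) x)%:C.

Definition calHm (kappa2 : R[i]) (n m : nat) (lam x : R) : R[i] :=
  kappa2 * (\sum_(m./2 <= l < (n./2).+1)
              lagA (l - m./2) (m./2) lam * hermite (2 * l) x)%:C.

Definition smallest_zero (f : R -> R) (lam : R) : Prop :=
  f lam = 0 /\ forall z, f z = 0 -> lam <= z.

End Defs.

(* Both polynomials are Christoffel–Darboux kernels evaluated at a zero [lam] of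
   the next Laguerre polynomial.  Summing the identity
   (t - lam) Q_j(lam) P_{M+j}(t)
     = b_{M+j+1} (Q_j P_{M+j+1} - Q_{j+1} P_{M+j}) - b_{M+j} (Q_{j-1} P_{M+j} - Q_j P_{M+j-1}),
   which follows from the shared recurrence of P = p^{(-1/2)} and Q = p^{(-1/2)}(., M),
   telescopes; at t = x^2 the term with Q_{K+1}(lam) = 0 drops out, and
   h_{2l}(x) = p^{(-1/2)}_l(x^2) turns the Laguerre values into Hermite ones. *)
From HB Require Import structures.
From mathcomp Require Import all_boot all_order all_algebra.
From mathcomp Require Import reals trigo.
From mathcomp Require Import complex.
From mathcomp Require Import ring lra.
Set Implicit Arguments. Unset Strict Implicit. Unset Printing Implicit Defensive.
Import Order.TTheory GRing.Theory Num.Theory.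
Local Open Scope ring_scope.

Section ChristoffelDarboux.
Variables (R : realType) (alpha : R).
Hypothesis lag_b_neq0 : forall k, lag_b alpha k.+1 != 0.

Lemma lag_pairS (M : nat) (c x : R) (l : nat) :
  lag_pair alpha M c x l.+1 =
  ((lag_pair alpha M c x l).2,
   ((x - lag_a alpha (M + l)) * (lag_pair alpha M c x l).2
    - lag_b alpha (M + l) * (lag_pair alpha M c x l).1) / lag_b alpha (M + l).+1).
Proof. by rewrite /=; case: (lag_pair _ _ _ _ l). Qed.

Lemma christoffel_darboux (M K : nat) (c d t lam : R) :
  let P := lag_pair alpha 0 d t in
  let Q := lag_pair alpha M c lam in
  (t - lam) * \sum_(0 <= j < K.+1) (Q j).2 * (P (M + j)%N).2
  = lag_b alpha (M + K).+1 * ((Q K).2 * (P (M + K).+1).2 - (Q K.+1).2 * (P (M + K)%N).2)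
    + c * lag_b alpha M * (P M).1.
Proof.
move=> P Q.
have PS k : P k.+1 = ((P k).2,
    ((t - lag_a alpha k) * (P k).2 - lag_b alpha k * (P k).1) / lag_b alpha k.+1).
  exact: lag_pairS.
have QS k : Q k.+1 = ((Q k).2,
    ((lam - lag_a alpha (M + k)) * (Q k).2 - lag_b alpha (M + k) * (Q k).1)
      / lag_b alpha (M + k).+1).
  exact: lag_pairS.
elim: K => [|K IH].
  by rewrite big_nat1 PS QS /= !addn0; field; rewrite ?lag_b_neq0.
rewrite big_nat_recr //= mulrDr IH !addnS (PS (M + K).+1) (QS K.+1) /= PS QS /= !addnS.
by field; rewrite ?lag_b_neq0.
Qed.

End ChristoffelDarboux.

Section HermiteLaguerre.
Variable R : realType.

Local Notation P := (lag_pair (alpha0 R) 0 (lag_p0 R)).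

Lemma bl_gt0 (k : nat) : (0 < k)%N -> 0 < bl R k.
Proof.
move=> k_gt0; rewrite /bl /lag_b /alpha0 sqrtr_gt0.
have k_ge1 : (1 : R) <= k%:R by rewrite ler1n.
rewrite -[(2%:R : R)^-1]mul1r; apply: mulr_gt0; lra.
Qed.

Lemma bl0 : bl R 0 = 0.
Proof. by rewrite /bl /lag_b mul0r sqrtr0. Qed.

Lemma bl_neq0 (k : nat) : bl R k.+1 != 0.
Proof. by rewrite gt_eqF // bl_gt0. Qed.

Definition herm_b (k : nat) : R := Num.sqrt (k%:R / 2%:R).

Lemma herm_pairS (x : R) (k : nat) :
  herm_pair x k.+1 =
  ((herm_pair x k).2,
   (x * (herm_pair x k).2 - herm_b k * (herm_pair x k).1) / herm_b k.+1).
Proof. by rewrite /=; case: (herm_pair x k). Qed.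

Lemma herm_b_sqr (k : nat) : herm_b k ^+ 2 = k%:R / 2.
Proof. by rewrite sqr_sqrtr // divr_ge0 ?ler0n. Qed.

Lemma herm_b_neq0 (k : nat) : herm_b k.+1 != 0.
Proof. by rewrite gt_eqF // sqrtr_gt0 divr_gt0 ?ltr0n. Qed.

Lemma bl_herm_b (l : nat) : bl R l = herm_b (2 * l) * herm_b (2 * l).-1.
Proof.
case: l => [|l]; first by rewrite bl0 /herm_b muln0 mul0r sqrtr0 mul0r.
rewrite /herm_b -sqrtrM ?divr_ge0 ?ler0n // /bl /lag_b /alpha0.
congr Num.sqrt; rewrite mulnS add2n /=.
rewrite -[l.+1]addn1 -[(2 * l).+2]addn2 -[(2 * l).+1]addn1 !natrD; by field.
Qed.

(* The odd-index neighbour h_{2l-1} is carried along because x h_{2l-1}(x) is a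
   combination of p_l(x^2) and p_{l-1}(x^2). *)
Lemma herm_pair_even (x : R) (l : nat) :
  (herm_pair x (2 * l)).2 = (P (x ^+ 2) l).2 /\
  x * (herm_pair x (2 * l)).1
  = herm_b (2 * l) * (P (x ^+ 2) l).2 + herm_b (2 * l).-1 * (P (x ^+ 2) l).1.
Proof.
elim: l => [|l [IHeven IHodd]].
  by rewrite muln0 /= /herm_b mul0r sqrtr0 !mulr0 mul0r addr0.
rewrite mulnS add2n !herm_pairS lag_pairS /= add0n IHeven.
have lag_a_herm : lag_a (alpha0 R) l = herm_b (2 * l) ^+ 2 + herm_b (2 * l).+1 ^+ 2.
  by rewrite !herm_b_sqr /lag_a /alpha0 -[(2 * l).+1]addn1 natrD natrM; field.
have bl_next : bl R l.+1 = herm_b (2 * l).+1 * herm_b (2 * l).+2.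
  by rewrite bl_herm_b mulnS add2n mulrC.
have odd_step : x * ((x * (P (x ^+ 2) l).2 - herm_b (2 * l) * (herm_pair x (2 * l)).1)
                     / herm_b (2 * l).+1)
  = ((x ^+ 2 - herm_b (2 * l) ^+ 2) * (P (x ^+ 2) l).2
     - bl R l * (P (x ^+ 2) l).1) / herm_b (2 * l).+1.
  rewrite bl_herm_b mulrA mulrBr mulrA -expr2 [x * (herm_b _ * _)]mulrCA IHodd.
  field; exact: herm_b_neq0.
have nz1 := herm_b_neq0 (2 * l); have nz2 := herm_b_neq0 (2 * l).+1.
rewrite odd_step -/(bl R l) -/(bl R l.+1) bl_next lag_a_herm.
split; first by field; rewrite nz1 nz2.
by field; rewrite nz1 nz2.
Qed.

Lemma hermite_even (x : R) (l : nat) : hermite (2 * l) x = lagN l (x ^+ 2).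
Proof. exact: (herm_pair_even x l).1. Qed.

(* For [M = 0] the index [M.-1] is junk, but the term carries the factor [bl R 0 = 0]. *)
Lemma hermite_kernel_sum (M K : nat) (c lam x : R) :
  (lag_pair (alpha0 R) M c lam K.+1).2 = 0 -> x ^+ 2 != lam ->
  \sum_(M <= l < (M + K).+1) (lag_pair (alpha0 R) M c lam (l - M)).2 * hermite (2 * l) x
  = (bl R (M + K).+1 * (lag_pair (alpha0 R) M c lam K).2 * hermite (2 * (M + K).+1) x
     + c * bl R M * hermite (2 * M.-1) x) / (x ^+ 2 - lam).
Proof.
move=> lam_root x2_neq; have x2_lam_neq0 : x ^+ 2 - lam != 0 by rewrite subr_eq0.
apply: (mulfI x2_lam_neq0); rewrite [RHS]mulrC divfK //.
rewrite -{1}[M]add0n big_addn subSn ?leq_addr // addKn.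
under eq_bigr => j _ do rewrite addnK addnC hermite_even.
rewrite (@christoffel_darboux _ _ bl_neq0) lam_root mul0r subr0 !hermite_even mulrA.
congr (_ + _); case: M {lam_root} => [|M]; first by rewrite bl0 !mulr0 !mul0r.
by rewrite lag_pairS.
Qed.

End HermiteLaguerre.

Lemma even_double_half (k : nat) : ~~ odd k -> k = (2 * k./2)%N.
Proof. by move=> k_even; rewrite mul2n -[LHS]odd_double_half (negbTE k_even). Qed.

Local Open Scope complex_scope.

Theorem corollary5p3 (R : realType) (n : nat) (hn : ~~ odd n) :
  (forall (kappa1 : R[i]) (lam x : R),
     smallest_zero (lagN (n./2).+1) lam -> x ^+ 2 != lam ->
     calH kappa1 n lam x =
       kappa1 * (bl R (n./2).+1 * lagN (n./2) lam * hermite (n + 2) x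
                 / (x ^+ 2 - lam))%:C)
  /\
  (forall (m : nat), ~~ odd m -> (2 <= m <= n)%N ->
   forall (kappa2 : R[i]) (lam x : R),
     smallest_zero (lagA ((n - m)./2).+1 (m./2)) lam -> x ^+ 2 != lam ->
     calHm kappa2 n m lam x =
       kappa2 * ((bl R (n./2).+1 * lagA ((n - m)./2) (m./2) lam * hermite (n + 2) x
                  + bl R (m./2) * hermite (m - 2) x)
                 / (x ^+ 2 - lam))%:C).
Proof.
move: (n./2) (even_double_half hn) => N -> {n hn}.
rewrite -mulnSr.
split=> [kappa1 lam x [lam_root _] x2_neq | m m_even /andP[m_ge2 m_le] kappa2 lam x].
  rewrite /calH mul2n doubleK; congr (_ * _%:C).
  have := hermite_kernel_sum lam_root x2_neq.
  rewrite !add0n bl0 mulr0 mul0r addr0 => <-.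
  by apply: eq_bigr => l _; rewrite subn0.
move: m_ge2 m_le; rewrite (even_double_half m_even) mul2n doubleK.
case: (m./2) => [|M] //; rewrite -mul2n leq_pmul2l // => _ M_le.
rewrite /calHm -mulnBr !mul2n !doubleK (doubleS M) -[M.*2.+2]addn2 addnK -!mul2n.
move=> [lam_root _] x2_neq.
set K := (N - M.+1)%N in lam_root *; rewrite -(subnKC M_le) -/K.
by congr (_ * _%:C); rewrite (hermite_kernel_sum lam_root x2_neq) mul1r.
Qed.
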